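(* Let $a,b$ be integers with $0<b<a$, let $S=\langle a,a+1,\ldots,a+b\rangle$ with conductor $c$, and let $m\ge 2c-1$. Let $M$ be an $(S,m,r)$-amenable set whose shadow $L_M$ has $t$ elements. Then there exists an $(S,m,r)$-amenable set $T$ whose shadow $L_T$ is an interval of integers containing $m$ and satisfies $\sharp L_T\le\sharp L_M$.
   Context: For $x\in S$, $\mathrm D(x)=\{\alpha\in S\mid x-\alpha\in S\}$. A set $M=\{m_1<\cdots<m_r\}\subseteq S$ with $2c-1\le m=m_1$ is $(S,m,r)$-amenable if $\mathrm D(m_i)\cap[m,\infty)\subseteq M$ for all $i$. The ground is $\{m,m+1,\ldots,m+a+b-1\}$, and the shadow of $M$ is $M\cap\{m,\ldots,m+a+b-1\}$. *)

From mathcomp Require Import all_boot.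
Set Implicit Arguments. Unset Strict Implicit. Unset Printing Implicit Defensive.

Definition inS (a b : nat) (x : nat) : Prop :=
  exists s : seq nat, all (fun g => (a <= g) && (g <= a + b)) s /\ sumn s = x.

Definition is_conductor (S : nat -> Prop) (c : nat) : Prop :=
  (forall n, c <= n -> S n) /\
  (forall c', (forall n, c' <= n -> S n) -> c <= c').

(* D(x) = { alpha in S | x - alpha in S } (integers, so alpha <= x). *)
Definition inD (S : nat -> Prop) (x alpha : nat) : Prop :=
  S alpha /\ alpha <= x /\ S (x - alpha).

Definition amenable (S : nat -> Prop) (c m r : nat) (M : seq nat) : Prop :=
  [/\ sorted ltn M, size M = r, 0 < r, nth 0 M 0 = m
    & [/\ (forall x, x \in M -> S x),
      2 * c - 1 <= m
    & forall x alpha, x \in M -> inD S x alpha -> m <= alpha -> alpha \in M]].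

Definition shadow (a b m : nat) (M : seq nat) : seq nat :=
  [seq x <- M | (m <= x) && (x < m + a + b)].

From mathcomp Require Import all_boot zify.

Set Implicit Arguments.
Unset Strict Implicit.
Unset Printing Implicit Defensive.

(* Shifting by m turns M into P = {u | m + u \in M}, and amenability makes P
   closed under subtracting the generators g in [a, a + b]; conversely every
   such closed set containing 0 shifts back to an amenable set.  Cut the
   naturals into blocks of length n = a + b.  Subtracting n - i (i <= b) and
   then multiples of n sends block j + 1 into block j, shifted cyclically by i,
   so a nonempty block j + 1 with k elements forces at least min(k + b, n)
   elements in block j.  Hence replacing each block by an initial segment of
   the same size keeps P closed and keeps its size, while block 0, the shadow,
   becomes an interval starting at m. *)

Lemma sub_in_count (T : eqType) (a1 a2 : pred T) (s : seq T) :
  {in s, subpred a1 a2} -> count a1 s <= count a2 s.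
Proof.
move=> sub12; rewrite -(@eq_in_count _ (predI a1 a2)) ?sub_count // => [x /andP[]//|x xs /=].
by case a1x: (a1 x) => //=; apply: sub12.
Qed.

Lemma count_sub_ltn (T : eqType) (a1 a2 : pred T) (s : seq T) x :
  subpred a1 a2 -> x \in s -> a2 x -> ~~ a1 x -> count a1 s < count a2 s.
Proof.
move=> sub12 xs a2x a1x.
have -> : count a2 s = count a1 s + count (predD a2 a1) s.
  rewrite -count_predUI (@eq_count _ (predI _ _) pred0) ?count_pred0 ?addn0.
    by apply: eq_count => y /=; case a1y: (a1 y); rewrite /= ?(sub12 _ a1y).
  by move=> y /=; case: (a1 y).
rewrite -{1}[count a1 s]addn0 ltn_add2l -has_count; apply/hasP; exists x => //=.
by rewrite a2x a1x.
Qed.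

Section CyclicThickening.

Variable n : nat.
Hypothesis n_gt0 : 0 < n.

Lemma exists_cyclic_exit (A : pred nat) x0 x :
  x0 < n -> A x0 -> x < n -> ~~ A x ->
  exists2 y, y < n & A y && ~~ A (y.+1 %% n).
Proof.
move=> x0n Ax0 xn Ax.
case: (boolP (has (fun y => A y && ~~ A (y.+1 %% n)) (iota 0 n))).
  by case/hasP => y; rewrite mem_iota; exists y.
move/hasPn=> no_exit.
have Ak k : A ((x0 + k) %% n).
  elim: k => [|k IHk]; first by rewrite addn0 modn_small.
  have := no_exit _ (_ : (x0 + k) %% n \in iota 0 n).
  rewrite mem_iota ltn_pmod // IHk /= negbK -addn1 modnDml addn1 addnS; exact.
by move: Ax; rewrite -(modn_small xn) -(modnDr x) (_ : x + n = x0 + (x + n - x0)) ?Ak //; lia.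
Qed.

Lemma count_cyclic_step (A B : pred nat) :
  subpred A B -> (forall x, A x -> B (x.+1 %% n)) -> has A (iota 0 n) ->
  minn (count A (iota 0 n)).+1 n <= count B (iota 0 n).
Proof.
move=> subAB AB /hasP[x0]; rewrite mem_iota => /andP[_ x0n] Ax0.
case: (boolP (all A (iota 0 n))) => [| /allPn[x]].
  rewrite all_count size_iota => /eqP countA.
  by rewrite countA (minn_idPr (leqnSn n)) -{1}countA sub_count.
rewrite mem_iota => /andP[_ xn] Ax.
have [y yn /andP[Ay Ay1]] := exists_cyclic_exit x0n Ax0 xn Ax.
have y1n : y.+1 %% n \in iota 0 n by rewrite mem_iota ltn_pmod.
by apply: leq_trans (geq_minl _ _) (count_sub_ltn subAB y1n (AB _ Ay) Ay1).
Qed.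

Lemma count_cyclic_thicken e (V W : pred nat) :
  has V (iota 0 n) -> (forall v i, V v -> i <= e -> W ((v + i) %% n)) ->
  minn (count V (iota 0 n) + e) n <= count W (iota 0 n).
Proof.
elim: e W => [|e IHe] W hasV VW.
  rewrite addn0 (leq_trans (geq_minl _ _)) // sub_in_count // => v.
  by rewrite mem_iota => /andP[_ vn] /VW /(_ (leqnn 0)); rewrite addn0 modn_small.
pose W' x := W x && W (x.+1 %% n).
have VW' v i : V v -> i <= e -> W' ((v + i) %% n).
  move=> Vv ie; rewrite /W' VW ?(leqW ie) //= -addn1 modnDml addn1 -addnS.
  exact: VW.
have hasW' : has W' (iota 0 n).
  have [v vn Vv] := hasP hasV; apply/hasP; exists v => //.
  by move: vn (VW' v 0 Vv (leq0n e)); rewrite mem_iota addn0 => /andP[_ /modn_small->].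
apply: leq_trans (@count_cyclic_step W' W _ _ hasW') => [|x /andP[] //|x /andP[] //].
by have := IHe _ hasV VW'; lia.
Qed.

End CyclicThickening.

Lemma leq_sumn_mem (s : seq nat) x : x \in s -> x <= sumn s.
Proof. by elim: s => //= y s IHs; rewrite inE => /predU1P[->|/IHs]; lia. Qed.

Lemma filter_iota0_ltn k n : k <= n -> [seq i <- iota 0 n | i < k] = iota 0 k.
Proof. exact: filter_iota_ltn. Qed.

Lemma filter_ltn_filter_iota (Q : pred nat) n N :
  n <= N -> [seq u <- [seq u <- iota 0 N | Q u] | u < n] = [seq u <- iota 0 n | Q u].
Proof.
move=> nN; rewrite -filter_predI (@eq_filter _ _ (predI Q (fun u => u < n))).
  by rewrite filter_predI filter_iota0_ltn.
by move=> u /=; rewrite andbC.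
Qed.

Definition block_count n (P : pred nat) j := count P (iota (j * n) n).

Definition packed n (P : pred nat) : pred nat :=
  fun u => u %% n < block_count n P (u %/ n).

Section Packing.

Variables (n : nat) (P : pred nat).
Hypothesis n_gt0 : 0 < n.

Lemma block_countE j : block_count n P j = count (fun i => P (j * n + i)) (iota 0 n).
Proof. by rewrite /block_count -[j * n]addn0 iotaDl count_map addn0. Qed.

Lemma block_count_le j : block_count n P j <= n.
Proof. by rewrite /block_count (leq_trans (count_size _ _)) ?size_iota. Qed.

Lemma packedE j i : i < n -> packed n P (j * n + i) = (i < block_count n P j).
Proof. by move=> lt_i_n; rewrite /packed modnMDl divnMDl // modn_small // divn_small ?addn0. Qed.

Lemma count_packed_block j : count (packed n P) (iota (j * n) n) = block_count n P j.
Proof.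
rewrite -[j * n]addn0 iotaDl count_map.
rewrite (@eq_in_count _ _ (fun i => i < block_count n P j)).
  by rewrite -size_filter (filter_iota0_ltn (block_count_le j)) size_iota.
by move=> i; rewrite mem_iota => /andP[_ /(packedE j)].
Qed.

Lemma count_packed K : count (packed n P) (iota 0 (K * n)) = count P (iota 0 (K * n)).
Proof.
elim: K => // K IHK.
by rewrite mulSnr iotaD !count_cat IHK add0n count_packed_block.
Qed.

Lemma filter_packed_prefix : [seq u <- iota 0 n | packed n P u] = iota 0 (count P (iota 0 n)).
Proof.
have le_cnt : count P (iota 0 n) <= n by have := block_count_le 0; rewrite /block_count mul0n.
rewrite -(filter_iota0_ltn le_cnt); apply: eq_in_filter => i.
by rewrite mem_iota => /andP[_ /(packedE 0)]; rewrite mul0n add0n /block_count mul0n.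
Qed.

Lemma packed0 : P 0 -> packed n P 0.
Proof.
move=> P0; rewrite -[0](addn0 (0 * n)) packedE // block_countE -has_count.
by apply/hasP; exists 0; rewrite ?mem_iota ?mul0n.
Qed.

End Packing.

Lemma inS_gen a b g : a <= g <= a + b -> inS a b g.
Proof. by move=> ag; exists [:: g]; rewrite /= ag addn0. Qed.

Lemma inS_muln a b g k : a <= g <= a + b -> inS a b (k * g).
Proof. by move=> ag; exists (nseq k g); rewrite all_nseq ag orbT sumn_nseq mulnC. Qed.

Definition gen_closed a b (P : pred nat) :=
  forall u g, P u -> a <= g <= a + b -> g <= u -> P (u - g).

Lemma gen_closed_subn_inS a b (P : pred nat) u y :
  gen_closed a b P -> P u -> inS a b y -> y <= u -> P (u - y).
Proof.
move=> P_gen Pu [s [gen_s <-]]; elim: s u Pu gen_s => [|g s IHs] u Pu /=.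
  by rewrite subn0.
by case/andP=> ag gen_s le_u; rewrite subnDA IHs ?P_gen //; lia.
Qed.

Section PackedGenClosed.

Variables (a b : nat) (P : pred nat).
Hypotheses (ab_gt0 : 0 < a + b) (P_gen : gen_closed a b P).
Local Notation n := (a + b).

Lemma block_count_pred j :
  0 < block_count n P j.+1 -> minn (block_count n P j.+1 + b) n <= block_count n P j.
Proof.
rewrite !block_countE -has_count => nonempty.
apply: count_cyclic_thicken => // v i Pv le_i_b.
have Pvi : P (j * n + (v + i)).
  have := P_gen Pv (_ : a <= n - i <= n) (_ : n - i <= j.+1 * n + v).
  by rewrite mulSn (_ : n + j * n + v - (n - i) = j * n + (v + i)); lia.
have v_i := divn_eq (v + i) n.
have := gen_closed_subn_inS P_gen Pvi (inS_muln ((v + i) %/ n) (_ : a <= n <= n)).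
by rewrite (_ : j * n + (v + i) - _ = j * n + (v + i) %% n); lia.
Qed.

Lemma packed_gen_closed : gen_closed a b (packed n P).
Proof.
move=> u g; rewrite (divn_eq u n); move: (u %/ n) (ltn_pmod u ab_gt0) => j.
set rho := u %% n => rho_lt; rewrite packedE // => rho_in ag le_g.
case: (leqP g rho) => [le_g_rho | lt_rho_g].
  by rewrite -addnBA // packedE; lia.
case: j le_g rho_in => [|j] le_g rho_in; first lia.
have := block_count_pred (leq_ltn_trans (leq0n rho) rho_in).
rewrite (_ : j.+1 * n + rho - g = j * n + (rho + n - g)) ?packedE; lia.
Qed.

End PackedGenClosed.

Lemma conductor_gt0 a b c : 1 < a -> (forall x, c <= x -> inS a b x) -> 0 < c.
Proof.
move=> a_gt1 inS_ge; case: (posnP c) => // c0.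
have /inS_ge[[|g s] []] //= : c <= 1 by rewrite c0.
by case/andP=> /andP[ag _] _; lia.
Qed.

Lemma shadow_shift a b m (s : seq nat) :
  shadow a b m (map (addn m) s) = map (addn m) [seq u <- s | u < a + b].
Proof.
rewrite /shadow filter_map; congr map; apply: eq_filter => u /=.
by rewrite leq_addr -addnA ltn_add2l.
Qed.

Lemma sorted_shift_filter_iota m N (Q : pred nat) :
  sorted ltn (map (addn m) [seq u <- iota 0 N | Q u]).
Proof.
rewrite sorted_map; apply: sub_sorted (sorted_filter ltn_trans _ (iota_ltn_sorted 0 N)).
by move=> x y; rewrite /relpre /= ltn_add2l.
Qed.

Lemma sorted_ltn_shift (M : seq nat) m N :
  sorted ltn M -> {in M, forall x, m <= x < m + N} ->
  M = map (addn m) [seq u <- iota 0 N | m + u \in M].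
Proof.
move=> M_sorted M_range.
apply: (irr_sorted_eq ltn_trans ltnn) => //; first exact: sorted_shift_filter_iota.
move=> x; apply/idP/mapP => [xM | [u]]; last by rewrite mem_filter => /andP[+ _] ->.
have /andP[le_m_x lt_x] := M_range x xM.
by exists (x - m); rewrite ?mem_filter ?mem_iota subnKC // xM /=; lia.
Qed.

Lemma amenable_ge S c m r M x : amenable S c m r M -> x \in M -> m <= x.
Proof.
case=> + _ _ + _; case: M => //= y M M_sorted <-{m}.
rewrite inE => /predU1P[-> // | /(allP (order_path_min ltn_trans M_sorted))].
exact: ltnW.
Qed.

Section AmenableShift.

Variables a b c m : nat.
Hypotheses (inS_ge : forall x, c <= x -> inS a b x) (le_c_m : c <= m).

Lemma amenable_gen_closed r M :
  amenable (inS a b) c m r M -> gen_closed a b (fun u => m + u \in M).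
Proof.
case=> _ _ _ _ [_ _ M_closed] u g Mu ag le_g_u.
apply: (M_closed (m + u)) => //; last exact: leq_addr.
split; first by apply: inS_ge; lia.
split; first lia.
by rewrite (_ : m + u - _ = g); [exact: inS_gen | lia].
Qed.

Lemma amenable_shift N (Q : pred nat) :
  2 * c - 1 <= m -> gen_closed a b Q -> Q 0 -> 0 < N ->
  amenable (inS a b) c m (count Q (iota 0 N)) (map (addn m) [seq u <- iota 0 N | Q u]).
Proof.
move=> m_ge Q_gen Q0 N_gt0; split.
- exact: sorted_shift_filter_iota.
- by rewrite size_map size_filter.
- by rewrite -has_count; apply/hasP; exists 0; rewrite ?mem_iota.
- by case: N N_gt0 => //= N _; rewrite Q0 /= addn0.
split=> //.
  by move=> x /mapP[u _ ->]; apply: inS_ge; lia.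
move=> x alpha /mapP[u]; rewrite mem_filter mem_iota => /andP[Qu /andP[_ lt_u_N]] ->.
case=> _ [le_alpha inS_diff] le_m_alpha; apply/mapP; exists (alpha - m); last lia.
have -> : alpha - m = u - (m + u - alpha) by lia.
by rewrite mem_filter mem_iota (gen_closed_subn_inS Q_gen Qu inS_diff) //; lia.
Qed.

End AmenableShift.

Theorem proposition4p26 (a b c m r : nat) (M : seq nat) :
  0 < b -> b < a ->
  is_conductor (inS a b) c ->
  2 * c - 1 <= m ->
  amenable (inS a b) c m r M ->
  exists T : seq nat,
    amenable (inS a b) c m r T /\
    (exists k, 0 < k /\ shadow a b m T = iota m k) /\
    size (shadow a b m T) <= size (shadow a b m M).
Proof.
move=> b_gt0 b_lt_a [inS_ge _] m_ge M_am.
have le_c_m : c <= m by have := @conductor_gt0 a b c (leq_ltn_trans b_gt0 b_lt_a) inS_ge; lia.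
set n := a + b; have n_gt0 : 0 < n by lia.
pose P u := m + u \in M.
have P_gen : gen_closed a b P := amenable_gen_closed inS_ge le_c_m M_am.
have [M_sorted M_size r_gt0 M_head _] := M_am.
have P0 : P 0 by rewrite /P addn0 -{1}M_head mem_nth // M_size.
pose N := (sumn M).+1 * n.
have le_n_N : n <= N by rewrite /N mulSn leq_addr.
have M_eq : M = map (addn m) [seq u <- iota 0 N | P u].
  apply: sorted_ltn_shift => // x xM; rewrite (amenable_ge M_am xM) /=.
  by have := leq_sumn_mem xM; have := leq_pmulr (sumn M).+1 n_gt0; lia.
exists (map (addn m) [seq u <- iota 0 N | packed n P u]); split; [|split].
- have -> : r = count (packed n P) (iota 0 N).
    by rewrite /N count_packed -/N // -M_size {1}M_eq size_map size_filter.
  apply: amenable_shift => //; [exact: packed_gen_closed | exact: packed0 | lia].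
- exists (count P (iota 0 n)); split.
    by rewrite -has_count; apply/hasP; exists 0; rewrite ?mem_iota.
  rewrite shadow_shift filter_ltn_filter_iota // (filter_packed_prefix _ n_gt0).
  by have := iotaDl m 0 (count P (iota 0 n)); rewrite addn0 => ->.
rewrite {1}M_eq !shadow_shift !size_map !filter_ltn_filter_iota //.
by rewrite (filter_packed_prefix _ n_gt0) size_iota size_filter.
Qed.
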